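(* Let $\epsilon>0$. If $A=(a_n)_{n\ge1}$ is a monotonically increasing sequence of positive integers which is $\epsilon$-complete, then there is a constant $C$ such that $a_n\le\sum_{i\le\epsilon n+C}a_i$ for all positive integers $n$.
   Context: For a sequence $A$ of positive integers, $\Sigma(A)$ is the set of sums of distinct terms of $A$; $A$ is complete if every sufficiently large positive integer lies in $\Sigma(A)$. $A$ is $\epsilon$-complete if every subsequence $A'$ of $A$ with $|A'\cap[n]|\ge\epsilon|A\cap[n]|$ for all sufficiently large $n$ is complete. *)

From Stdlib Require Import Reals.
From mathcomp Require Import all_boot.

Set Implicit Arguments.
Unset Strict Implicit.
Unset Printing Implicit Defensive.

(* A sequence A = (a_n)_{n>=1} is a function a : nat -> nat; the value a 0 is
   irrelevant (never used).  A subsequence A' of A is given by a set of indices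
   I : nat -> bool (classically every subset of nat is such a predicate). *)

Definition incr_pos_seq (a : nat -> nat) : Prop :=
  (forall n, 1 <= n -> 0 < a n) /\ (forall n, 1 <= n -> a n < a n.+1).

(* For an increasing
   sequence of positive integers a_i >= i, so only indices i <= n can
   contribute, and the count over 1 <= i <= n is exact. *)
Definition count_le (I : nat -> bool) (a : nat -> nat) (n : nat) : nat :=
  \sum_(1 <= i < n.+1 | I i && (a i <= n)) 1.

Definition in_subset_sums (I : nat -> bool) (a : nat -> nat) (m : nat) : Prop :=
  exists s : seq nat, uniq s /\ all (fun i => (1 <= i) && I i) s /\
                      m = \sum_(i <- s) a i.

Definition complete_sub (I : nat -> bool) (a : nat -> nat) : Prop :=
  exists N, forall m, N <= m -> 0 < m -> in_subset_sums I a m.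

Definition eps_complete (eps : R) (a : nat -> nat) : Prop :=
  forall I : nat -> bool,
    (exists N, forall n, N <= n ->
        Rle (Rmult eps (INR (count_le predT a n))) (INR (count_le I a n))) ->
    complete_sub I a.

Definition Rleb (x y : R) : bool := if Rle_dec x y then true else false.

(* \sum_{1 <= i <= x} a_i  (i ranging over positive integers with i <= x);
   the range bound Z.to_nat (up x) exceeds every integer i <= x. *)
Definition sum_upto (a : nat -> nat) (x : R) : nat :=
  \sum_(1 <= i < (Z.to_nat (up x)).+1 | Rleb (INR i) x) a i.

(* If eps >= 1 then C = 0 works.  Otherwise suppose no C works: for every c
   some index n has a_1 + ... + a_(eps n + c) < a_n.  Iterating this gives
   indices peak_1 < peak_2 < ...; deleting from A a block of indices ending
   just before each peak_(j+1), of length at most (1 - eps) peak_(j+1), leaves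
   a subsequence of lower density at least eps.  It is complete by
   eps-completeness, yet misses a_(peak_(j+1)) - 1 for every j: the surviving
   terms beyond the block are too large, those before it sum to less. *)

From Stdlib Require Import Reals.
From mathcomp Require Import all_boot.
From Stdlib Require Import ZArith Lra Lia Classical IndefiniteDescription.
From mathcomp Require Import zify.

Set Implicit Arguments.
Unset Strict Implicit.
Unset Printing Implicit Defensive.

Delimit Scope R_scope with Re.

Definition nat_up (x : R) : nat := Z.to_nat (up x).

Lemma nat_up_gt (x : R) (u : nat) : (INR u <= x)%Re -> u < nat_up x.
Proof.
move=> le_ux; have [gt_up _] := archimed x.
have : (Z.of_nat u < up x)%Z by apply: lt_IZR; rewrite -INR_IZR_INZ; lra.
rewrite /nat_up; lia.
Qed.

Lemma INR_nat_up (x : R) : (0 <= x)%Re -> (x < INR (nat_up x) <= x + 1)%Re.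
Proof.
move=> x_ge0; have [gt_up le_up] := archimed x.
have up_gt0 : (0 < up x)%Z by apply: lt_IZR; lra.
rewrite /nat_up INR_IZR_INZ Z2Nat.id; [lra | lia].
Qed.

Lemma sum_upto_ge_prefix (a : nat -> nat) (x : R) (u : nat) :
  (INR u <= x)%Re -> \sum_(1 <= i < u.+1) a i <= sum_upto a x.
Proof.
move=> le_ux; apply: (@le_big_nat_cond _ addn leq leqnn (fun m n => leq_addr n m)) => //.
  by rewrite ltnS ltnW // nat_up_gt.
move=> i /andP[_ lt_iu] _; rewrite /Rleb; case: Rle_dec => // [[]].
by apply: Rle_trans le_ux; apply: le_INR; apply/leP; rewrite -ltnS.
Qed.

Lemma leq_sum_uniq_range (a : nat -> nat) (s : seq nat) (m n : nat) :
  uniq s -> (forall i, i \in s -> m <= i < n) ->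
  \sum_(i <- s) a i <= \sum_(m <= i < n) a i.
Proof.
move=> s_uniq s_range.
apply: (@uniq_sub_le_big _ addn leq leqnn (fun m n => leq_addr n m)) => //.
  exact: iota_uniq.
by move=> i /s_range; rewrite mem_index_iota.
Qed.

Lemma leq_last_sum_nat (a : nat -> nat) (m n : nat) :
  m <= n -> a n <= \sum_(m <= i < n.+1) a i.
Proof. by move=> le_mn; rewrite big_nat_recr //= leq_addl. Qed.

Lemma incr_pos_seq_leq (a : nat -> nat) :
  incr_pos_seq a -> forall i j, 0 < i -> i <= j -> a i <= a j.
Proof.
case=> _ a_lt i j i_gt0 le_ij.
apply: (@homo_leq_in _ [pred k | 0 < k] a leq leqnn leq_trans) => //.
- by move=> k l k_gt0 _ k' /andP[lt_kk' _]; apply: leq_ltn_trans lt_kk'.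
- by move=> k k_gt0 _; apply/ltnW/a_lt.
- exact: leq_trans le_ij.
Qed.

Lemma incr_pos_seq_ge_id (a : nat -> nat) :
  incr_pos_seq a -> forall n, 0 < n -> n <= a n.
Proof.
case=> a_gt0 a_lt; elim=> [//|[|n] IHn _]; first exact: a_gt0.
by apply: leq_ltn_trans (a_lt _ _); rewrite ?IHn.
Qed.

Definition count_upto (P : pred nat) (t : nat) : nat := \sum_(1 <= i < t.+1 | P i) 1.

Lemma count_upto_ge_interval (P : pred nat) (m n t : nat) :
  0 < m -> n <= t.+1 -> (forall i, m <= i < n -> P i) -> n - m <= count_upto P t.
Proof.
move=> m_gt0 le_nt P_mn.
have -> : n - m = \sum_(m <= i < n | P i) 1.
  by rewrite -[LHS]muln1 -sum_nat_const_nat big_nat_cond [RHS]big_nat_cond;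
    apply: eq_bigl => i; case/boolP: (m <= i < n) => // /P_mn ->.
exact: (@le_big_nat_cond _ addn leq leqnn (fun m n => leq_addr n m)).
Qed.

Lemma count_uptoS (P : pred nat) (t : nat) :
  count_upto P t.+1 = count_upto P t + P t.+1.
Proof. by rewrite /count_upto big_mkcond big_nat_recr //= -big_mkcond; case: (P t.+1). Qed.

Lemma eq_count_upto (P Q : pred nat) (t : nat) :
  (forall i, 0 < i <= t -> P i = Q i) -> count_upto P t = count_upto Q t.
Proof.
move=> eqPQ; rewrite /count_upto big_nat_cond [RHS]big_nat_cond.
by apply: eq_bigl => i; case/boolP: (1 <= i < t.+1) => //= /eqPQ ->.
Qed.

Lemma count_upto_predT (t : nat) : count_upto predT t = t.
Proof. by rewrite /count_upto sum_nat_const_nat subn1 muln1. Qed.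

(* A downward closed [P] cuts out an initial segment of the indices, on which
   [I] keeps its lower density. *)
Lemma count_upto_lower_density_restrict (eps : R) (I P : pred nat) :
  (forall t, (eps * INR t <= INR (count_upto I t))%Re) ->
  (forall i j, 0 < i -> i <= j -> P j -> P i) ->
  forall r, (eps * INR (count_upto P r) <= INR (count_upto (predI I P) r))%Re.
Proof.
move=> I_dense P_down; elim=> [|r IHr]; first by rewrite /count_upto !big_geq //=; lra.
case/boolP: (P r.+1) => [P_r | nP_r]; last first.
  by rewrite !count_uptoS /= (negbTE nP_r) andbF !addn0.
have P_le i : 0 < i <= r.+1 -> P i.
  by case/andP=> i_gt0 le_ir; apply: P_down P_r.
rewrite (@eq_count_upto P predT) ?(@eq_count_upto (predI I P) I) ?count_upto_predT.
- exact: I_dense.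
- by move=> i /P_le /= ->; rewrite andbT.
- by move=> i /P_le ->.
Qed.

Lemma count_le_lower_density (eps : R) (I : pred nat) (a : nat -> nat) :
  incr_pos_seq a -> (forall t, (eps * INR t <= INR (count_upto I t))%Re) ->
  forall n, (eps * INR (count_le predT a n) <= INR (count_le I a n))%Re.
Proof.
move=> a_incr I_dense n.
apply: (count_upto_lower_density_restrict (P := fun i => a i <= n)) => // i j i_gt0 le_ij.
exact/leq_trans/incr_pos_seq_leq.
Qed.

Section GappedSubsequence.

Variables (eps : R) (a : nat -> nat) (g : nat -> nat).
Hypotheses (eps_gt0 : (0 < eps)%Re) (eps_le1 : (eps <= 1)%Re).
Hypothesis a_incr : incr_pos_seq a.
Hypothesis g_gt0 : forall c, 0 < g c.
Hypothesis g_large : forall c, sum_upto a (eps * INR (g c) + INR c) < a (g c).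

(* [g c] is an index at which the constant [c] fails; the summand [j] in
   [gap_start j] makes the values missed by [gapped] unbounded. *)
Fixpoint peak (j : nat) : nat := if j is j'.+1 then g (peak j' + j' + 2) else 0.

Definition gap_start (j : nat) : nat :=
  peak j + j + 1 + nat_up (eps * INR (peak j.+1))%Re.

Definition in_gap (i : nat) : bool := has (fun j => gap_start j <= i < peak j.+1) (iota 0 i).

Definition gapped (i : nat) : bool := (0 < i) && ~~ in_gap i.

Lemma INR_nat_up_eps_peak (j : nat) :
  (eps * INR (peak j.+1) < INR (nat_up (eps * INR (peak j.+1))) <=
   eps * INR (peak j.+1) + 1)%Re.
Proof. by apply: INR_nat_up; have := pos_INR (peak j.+1); nra. Qed.

Lemma sum_upto_gap_start_lt_peak (j : nat) :
  \sum_(1 <= i < (gap_start j).+1) a i < a (peak j.+1).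
Proof.
apply: leq_ltn_trans (g_large (peak j + j + 2)); apply: sum_upto_ge_prefix.
rewrite -/(peak j.+1); have := INR_nat_up_eps_peak j.
rewrite /gap_start !plus_INR [INR 1]/= [INR 2]/=; lra.
Qed.

Lemma peak_lt_gap_start (j : nat) : peak j < gap_start j.
Proof. by rewrite /gap_start; lia. Qed.

Lemma gap_start_lt_peak (j : nat) : gap_start j < peak j.+1.
Proof.
rewrite ltnNge; apply/negP => le_pu.
have le_ap : a (peak j.+1) <= a (gap_start j).
  exact (incr_pos_seq_leq a_incr (g_gt0 _) le_pu).
have := sum_upto_gap_start_lt_peak j.
have := @leq_last_sum_nat a 1 (gap_start j) (leq_trans (ltn0Sn _) (peak_lt_gap_start j)).
lia.
Qed.

Lemma peak_increasing : {homo peak : i j / i < j}.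
Proof.
apply: homo_ltn ltn_trans _ => j.
exact: ltn_trans (peak_lt_gap_start j) (gap_start_lt_peak j).
Qed.

Lemma peak_mono : {homo peak : i j / i <= j}.
Proof. by move=> i j; rewrite leq_eqVlt => /predU1P[-> // | /peak_increasing/ltnW]. Qed.

Lemma in_gapP (i : nat) : reflect (exists j, gap_start j <= i < peak j.+1) (in_gap i).
Proof.
apply: (iffP hasP) => [[j _ gap_ij] | [j gap_ij]]; first by exists j.
by exists j; rewrite // mem_iota add0n; move: gap_ij; rewrite /gap_start; lia.
Qed.

Lemma not_in_gap_between (i j : nat) : peak j < i < gap_start j -> ~~ in_gap i.
Proof.
move=> /andP[lt_pi lt_iu]; apply/in_gapP => -[k /andP[le_uk_i lt_i_pk]].
have := peak_lt_gap_start k; have := gap_start_lt_peak j.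
case: (ltngtP k j) => [lt_kj | lt_jk | eq_kj].
- have := peak_mono lt_kj; lia.
- have := peak_mono lt_jk; lia.
- by subst k; lia.
Qed.

Lemma count_upto_gapped_ge (t : nat) : (eps * INR t <= INR (count_upto gapped t))%Re.
Proof.
elim: t => [|t IHt]; first by rewrite /count_upto big_geq //=; lra.
case/boolP: (gapped t.+1) => [gapped_t | not_gapped].
  by rewrite count_uptoS gapped_t addn1 !S_INR; lra.
have /in_gapP[j /andP[le_ut lt_tp]] : in_gap t.+1.
  by apply: contraNT not_gapped => not_in_gap; rewrite /gapped not_in_gap.
have gap_sub : gap_start j - (peak j).+1 <= count_upto gapped t.+1.
  apply: count_upto_ge_interval => // [|i lt_gap]; first exact: leqW.
  by rewrite /gapped (not_in_gap_between lt_gap) andbT; case/andP: lt_gap; lia.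
have gap_len : nat_up (eps * INR (peak j.+1)) <= gap_start j - (peak j).+1.
  by rewrite /gap_start; lia.
have := le_INR _ _ (leP (leq_trans gap_len gap_sub)).
have := le_INR _ _ (leP (ltnW lt_tp)).
have := INR_nat_up_eps_peak j.
nra.
Qed.

Lemma gapped_not_complete : ~ complete_sub gapped a.
Proof.
case=> N sums.
have u_gt0 : 0 < gap_start N := leq_ltn_trans (leq0n _) (peak_lt_gap_start N).
have a_u_gt0 : 0 < a (gap_start N) := a_incr.1 _ u_gt0.
have split_sum : \sum_(1 <= i < (gap_start N).+1) a i
                 = \sum_(1 <= i < gap_start N) a i + a (gap_start N).
  by rewrite big_nat_recr.
have lt_sum := sum_upto_gap_start_lt_peak N; rewrite split_sum in lt_sum.
have N_lt_u : N < gap_start N by rewrite /gap_start; lia.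
have u_le_a := incr_pos_seq_ge_id a_incr u_gt0.
have [s [s_uniq [s_gapped s_sum]]] : in_subset_sums gapped a (a (peak N.+1)).-1.
  by apply: sums; lia.
have s_range x : x \in s -> 1 <= x < gap_start N.
  move=> x_s; have /andP[x_gt0 gapped_x] := allP s_gapped x x_s.
  have /andP[_ not_in_gap_x] := gapped_x.
  rewrite x_gt0 ltnNge; apply/negP => le_ux.
  have a_x_le : a x <= (a (peak N.+1)).-1 by rewrite s_sum (bigD1_seq x) //= leq_addr.
  have lt_xp : x < peak N.+1.
    rewrite ltnNge; apply/negP => le_px.
    have : a (peak N.+1) <= a x.
      exact (incr_pos_seq_leq a_incr (g_gt0 _) le_px).
    lia.
  by move/negP: not_in_gap_x; apply; apply/in_gapP; exists N; rewrite le_ux.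
have := leq_sum_uniq_range a s_uniq s_range; rewrite -s_sum; lia.
Qed.

Lemma not_eps_complete : ~ eps_complete eps a.
Proof.
move=> a_complete; apply: gapped_not_complete; apply: a_complete.
by exists 0 => n _; apply: count_le_lower_density a_incr count_upto_gapped_ge n.
Qed.

End GappedSubsequence.

Theorem theorem4p1 (eps : R) (a : nat -> nat) :
  Rlt 0 eps ->
  incr_pos_seq a ->
  eps_complete eps a ->
  exists C : R, forall n : nat, 1 <= n -> a n <= sum_upto a (Rplus (Rmult eps (INR n)) C).
Proof.
move=> eps_gt0 a_incr a_complete.
have [eps_ge1 | eps_lt1] := Rle_or_lt 1 eps.
  exists 0%Re => n n_gt0; apply: leq_trans (sum_upto_ge_prefix a (u := n) _).
    exact: leq_last_sum_nat.
  by have := pos_INR n; nra.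
apply: NNPP => no_C.
have witness c : exists n, 0 < n /\ sum_upto a (eps * INR n + INR c) < a n.
  apply: NNPP => no_n; apply: no_C; exists (INR c) => n n_gt0.
  by rewrite leqNgt; apply/negP => lt_sum; apply: no_n; exists n.
have [g g_spec] := @functional_choice _ _ _ witness.
apply: (@not_eps_complete eps a g) => //; first lra; by move=> c; case: (g_spec c).
Qed.
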